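(* Let $\tau\in\mathcal S_0^+$ and $x,y\in[0,\infty)$. Then $$\tau(x)+\tau(y)\ \le\ \tau(|x-y|)+2y\,\tau'(x).$$
   Context: $\mathcal S_0^+$ is the set of nondecreasing convex $\tau:[0,\infty)\to\mathbb R$, differentiable on $(0,\infty)$ with concave derivative $\tau'$, where $\tau'(0):=\lim_{x\searrow0}\tau'(x)$, such that $\tau(0)=0$ and $\tau'(x)>0$ for all $x>0$. *)

From Stdlib Require Import Reals.
From Coquelicot Require Import Coquelicot.
Open Scope R_scope.

Definition convex_on (D : R -> Prop) (f : R -> R) : Prop :=
  forall a b t, D a -> D b -> 0 <= t <= 1 ->
    f (t * a + (1 - t) * b) <= t * f a + (1 - t) * f b.

Definition concave_on (D : R -> Prop) (f : R -> R) : Prop :=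
  forall a b t, D a -> D b -> 0 <= t <= 1 ->
    t * f a + (1 - t) * f b <= f (t * a + (1 - t) * b).

(* [S0plus tau dtau]: tau : [0,oo) -> R belongs to S_0^+ and dtau is its
   derivative tau' : dtau x = tau'(x) for x > 0, and
   dtau 0 = tau'(0) := lim_{x -> 0+} tau'(x).
   (Values of tau, dtau on (-oo,0) are irrelevant.) *)
Definition S0plus (tau dtau : R -> R) : Prop :=
  (forall x y, 0 <= x -> x <= y -> tau x <= tau y) /\
  convex_on (fun x => 0 <= x) tau /\
  (forall x, 0 < x -> is_derive tau x (dtau x)) /\
  concave_on (fun x => 0 < x) dtau /\
  filterlim dtau (at_right 0) (locally (dtau 0)) /\
  tau 0 = 0 /\
  (forall x, 0 < x -> 0 < dtau x).

(* In the case [y <= x] the mean value theorem and the monotonicity of [tau']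
   give [tau x - tau (x - y) <= y tau'(x)] and [tau y <= y tau'(y) <= y tau'(x)].
   In the case [x < y] they give [tau y - tau (y - x) <= x tau'(y)] and
   [tau x <= x tau'(x)], and one concludes with [x tau'(y) <= y tau'(x)]: a
   nonnegative concave function [g] on [(0, oo)] is nondecreasing and
   [g(s) / s] is nonincreasing. *)

From Stdlib Require Import Reals Lra.
From Coquelicot Require Import Coquelicot.
Open Scope R_scope.

Lemma affine_nonneg_at_0 (A B x : R) :
  0 < x -> (forall e, 0 < e < x -> 0 <= A + e * B) -> 0 <= A.
Proof.
  intros Hx Haff.
  destruct (Rle_or_lt 0 A) as [HA | HA]; [exact HA | exfalso].
  pose proof (Rabs_pos B) as HB.
  set (e := Rmin (x / 2) (- A / (2 * (Rabs B + 1)))).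
  assert (He_pos : 0 < e).
  { apply Rmin_glb_lt; [lra | apply Rdiv_lt_0_compat; lra]. }
  assert (He_x : e < x) by (unfold e; pose proof (Rmin_l (x / 2) (- A / (2 * (Rabs B + 1)))); lra).
  assert (He_A : e * (2 * (Rabs B + 1)) <= - A).
  { unfold e; pose proof (Rmin_r (x / 2) (- A / (2 * (Rabs B + 1)))) as He.
    apply (Rmult_le_compat_r (2 * (Rabs B + 1))) in He; [|lra].
    unfold Rdiv in He; rewrite Rmult_assoc, Rinv_l in He; lra. }
  assert (e * B <= e * Rabs B) by (apply Rmult_le_compat_l; [lra | apply Rle_abs]).
  pose proof (Haff e (conj He_pos He_x)).
  nra.
Qed.

Lemma right_limit_at_0_nonneg (f : R -> R) (l : R) :
  filterlim f (at_right 0) (locally l) -> (forall x, 0 < x -> 0 <= f x) -> 0 <= l.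
Proof.
  intros Hlim Hf.
  apply (closed_filterlim_loc f (fun u => 0 <= u) l Hlim); [| apply closed_ge].
  exists (mkposreal 1 Rlt_0_1); intros z _ Hz; exact (Hf z Hz).
Qed.

Section ConcaveNonneg.

Variable g : R -> R.
Hypothesis g_concave : concave_on (fun x => 0 < x) g.
Hypothesis g_nonneg : forall x, 0 < x -> 0 <= g x.

Lemma concave_three_point (a b c : R) :
  0 < a -> a < b < c -> (c - b) * g a + (b - a) * g c <= (c - a) * g b.
Proof.
  intros Ha [Hab Hbc].
  set (t := (c - b) / (c - a)).
  assert (Ht : 0 <= t <= 1).
  { unfold t; split; [apply Rdiv_le_0_compat; lra|].
    apply (Rmult_le_reg_r (c - a)); [lra|]; field_simplify; lra. }
  pose proof (g_concave a c t Ha ltac:(lra) Ht) as K.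
  replace (t * a + (1 - t) * c) with b in K by (unfold t; field; lra).
  apply (Rmult_le_compat_l (c - a)) in K; [|lra].
  replace ((c - a) * (t * g a + (1 - t) * g c))
    with ((c - b) * g a + (b - a) * g c) in K by (unfold t; field; lra).
  exact K.
Qed.

Lemma concave_nonneg_nondecreasing (a b : R) : 0 < a -> a <= b -> g a <= g b.
Proof.
  intros Ha Hab.
  destruct (Req_dec a b) as [<- | Hne]; [lra|].
  destruct (Rle_or_lt (g a) (g b)) as [Hle | Hlt]; [exact Hle | exfalso].
  pose proof (g_nonneg b ltac:(lra)).
  (* Extrapolating the chord through [a] and [b] far enough to the right makes
     [g] negative. *)
  set (c := b + 1 + b * g a / (g a - g b)).
  assert (Hc : (c - b) * (g a - g b) = g a - g b + b * g a)
    by (unfold c; field; lra).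
  assert (0 <= b * g a / (g a - g b))
    by (apply Rdiv_le_0_compat; [apply Rmult_le_pos|]; lra).
  pose proof (concave_three_point a b c Ha ltac:(unfold c; lra)).
  pose proof (g_nonneg c ltac:(unfold c; lra)).
  nra.
Qed.

Lemma concave_nonneg_ratio (x y : R) : 0 < x -> x <= y -> x * g y <= y * g x.
Proof.
  intros Hx Hxy.
  destruct (Req_dec x y) as [<- | Hne]; [lra|].
  (* The three-point inequality for [e < x < y], letting [e] tend to [0]. *)
  enough (0 <= (y * g x - x * g y) + 0) by lra.
  apply (affine_nonneg_at_0 _ (g y - g x) x Hx).
  intros e He.
  pose proof (concave_three_point e x y ltac:(lra) ltac:(lra)).
  pose proof (g_nonneg e ltac:(lra)).
  nra.
Qed.

End ConcaveNonneg.

Section ConvexIncrement.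

Variables tau dtau : R -> R.
Hypothesis tau_convex : convex_on (fun x => 0 <= x) tau.
Hypothesis tau_derive : forall x, 0 < x -> is_derive tau x (dtau x).
Hypothesis dtau_nondecreasing : forall a b, 0 < a -> a <= b -> dtau a <= dtau b.

(* [tau] need not be differentiable, nor even continuous, at [a = 0]: the mean
   value theorem is applied on the right half [[m, b]] only, and convexity
   bounds the increment on the left half by the one on the right half. *)
Lemma convex_increment_le (a b : R) :
  0 <= a -> a <= b -> tau b - tau a <= (b - a) * dtau b.
Proof.
  intros Ha Hab.
  destruct (Req_dec a b) as [<- | Hne]; [lra|].
  set (m := (a + b) / 2).
  assert (Hmid : tau m - tau a <= tau b - tau m).
  { pose proof (tau_convex b a (1 / 2) ltac:(lra) Ha ltac:(lra)) as K.
    replace (1 / 2 * b + (1 - 1 / 2) * a) with m in K by (unfold m; field).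
    lra. }
  destruct (MVT_cor2 tau dtau m b ltac:(unfold m; lra)) as [c [Hmvt Hc]].
  { intros z Hz; apply is_derive_Reals, tau_derive; unfold m in Hz; lra. }
  assert (Hcb : dtau c <= dtau b) by (apply dtau_nondecreasing; unfold m in Hc; lra).
  assert (tau b - tau m <= (b - m) * dtau b).
  { rewrite Hmvt, (Rmult_comm (b - m)).
    apply Rmult_le_compat_r; [unfold m; lra | exact Hcb]. }
  unfold m in *; lra.
Qed.

End ConvexIncrement.

Theorem mainTheorem18 (tau dtau : R -> R) (x y : R) :
  S0plus tau dtau -> 0 <= x -> 0 <= y ->
  tau x + tau y <= tau (Rabs (x - y)) + 2 * y * dtau x.
Proof.
  intros (_ & tau_convex & tau_derive & dtau_concave & dtau_lim & tau0 & dtau_pos) Hx Hy.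
  assert (dtau_nonneg : forall z, 0 < z -> 0 <= dtau z) by (intros; left; auto).
  pose proof (concave_nonneg_nondecreasing dtau dtau_concave dtau_nonneg) as dtau_incr.
  pose proof (convex_increment_le tau dtau tau_convex tau_derive dtau_incr) as increment.
  assert (dtau_x : 0 <= dtau x).
  { destruct (Req_dec x 0) as [-> | Hx0];
      [exact (right_limit_at_0_nonneg dtau _ dtau_lim dtau_nonneg) | apply dtau_nonneg; lra]. }
  destruct (Rle_or_lt y x) as [Hyx | Hxy].
  - rewrite Rabs_right by lra.
    pose proof (increment (x - y) x ltac:(lra) ltac:(lra)).
    pose proof (increment 0 y (Rle_refl 0) Hy).
    assert (y * dtau y <= y * dtau x).
    { destruct (Req_dec y 0) as [-> | Hy0]; [lra|].
      apply Rmult_le_compat_l, dtau_incr; lra. }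
    lra.
  - rewrite Rabs_left, Ropp_minus_distr by lra.
    pose proof (increment (y - x) y ltac:(lra) ltac:(lra)).
    pose proof (increment 0 x (Rle_refl 0) Hx).
    assert (x * dtau y <= y * dtau x).
    { destruct (Req_dec x 0) as [-> | Hx0]; [nra|].
      apply concave_nonneg_ratio; auto; lra. }
    nra.
Qed.
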